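(* (1) For every positive divisor $\delta$ of $\lambda(2)$, $\displaystyle\sum_{\substack{a\in U_2\\ \mathrm{ind}_2(a)=\delta}}a\equiv 1\pmod 2$. (2) For every positive divisor $\delta$ of $\lambda(4)$, $\displaystyle\sum_{\substack{a\in U_4\\ \mathrm{ind}_4(a)=\delta}}a\equiv (-1)^{\delta+1}\pmod 4$. (3) For every positive divisor $\delta$ of $\lambda(8)$, $\displaystyle\sum_{\substack{a\in U_8\\ \mathrm{ind}_8(a)=\delta}}a\equiv (-1)^{\delta+1}\pmod 8$. (4) Let $\alpha>3$ and $\delta=2^{\beta}$ with $1<\beta\le\alpha-2$. Then $\displaystyle\sum_{\substack{a\in U_{2^\alpha}\\ \mathrm{ind}_{2^\alpha}(a)=\delta}}a\equiv 0\pmod{2^\alpha}$. (5) Let $p$ be an odd prime, $\alpha$ a positive integer, and $\delta$ a positive divisor of $\lambda(p^\alpha)=\phi(p^\alpha)$. Then $$\sum_{\substack{a\in U_{p^\alpha}\\ \mathrm{ind}_{p^\alpha}(a)=\delta}}a\equiv \mu\big((\delta,p-1)\big)\,\phi\big(p^{\mathrm{ord}_p(\delta)}\big)\pmod{p^\alpha}.$$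
   Context: $U_m$ denotes the set of invertible residue classes in $\mathbb{Z}/m\mathbb{Z}$ (sums run over one representative of each such class). For $a$ coprime to $m$, $\mathrm{ind}_m(a)$ is the multiplicative order of $a$ modulo $m$. $\lambda(m)$ is the Carmichael function: the smallest $k>0$ such that $a^k\equiv 1\pmod m$ for all $a\in U_m$. $\mu$ is the Möbius function, $\phi$ Euler's totient function, $(x,y)$ the greatest common divisor, and $\mathrm{ord}_p(n)=\max\{k: p^k\mid n\}$. *)

From mathcomp Require Import all_boot all_order all_algebra.
Set Implicit Arguments. Unset Strict Implicit. Unset Printing Implicit Defensive.

(* Multiplicative order of a modulo m: the least k > 0 with a^k = 1 (mod m).
   For coprime a and m >= 1 this order is <= phi(m) <= m, so searching
   k in 1..m finds it; for non-coprime a the value is irrelevant (m+1). *)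
Definition ind (m a : nat) : nat :=
  (find (fun k => a ^ k.+1 == 1 %[mod m]) (iota 0 m)).+1.

(* Carmichael function: the least k > 0 with a^k = 1 (mod m) for every
   a in U_m (residues 0 <= a < m coprime to m).  Again lambda(m) <= m. *)
Definition carmichael (m : nat) : nat :=
  (find (fun k => [forall a : 'I_m, coprime a m ==> (a ^ k.+1 == 1 %[mod m])])
        (iota 0 m)).+1.

(* Moebius function on positive integers (mu 0 := 0 by convention). *)
Definition moebius (n : nat) : int :=
  if n == 0 then 0%R
  else if all (fun p => logn p n == 1) (primes n)
       then ((-1) ^+ size (primes n))%R else 0%R.

Definition sum_ind (m d : nat) : nat :=
  \sum_(a < m | coprime a m && (ind m a == d)) a.

From mathcomp Require Import all_boot all_order all_algebra all_fingroup all_solvable zify.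
Set Implicit Arguments. Unset Strict Implicit. Unset Printing Implicit Defensive.
Import GRing.Theory FinRing.Theory.

(* If the set of units of order d is stable under a -> h a for a unit h such
   that h - 1 is also a unit, then its sum S satisfies h S = S, hence S = 0.
   When h has prime order q, this stability holds as soon as q^2 | d, and when
   q exactly divides d it holds for the union of the classes of orders d and d/q.
   For p odd, every prime q dividing gcd(d, p - 1) yields such an h modulo p^a
   (a lift of an element of order q modulo p), so induction on d reduces the
   sum to the case gcd(d, p - 1) = 1, i.e. d = p^k; there the units whose order
   divides p^j are exactly the residues 1 mod p^(a-j), with sum p^j, and the
   difference of two such sums is phi(p^k).  Modulo 2^a no such h exists, but
   the classes are stable under a -> -a and a -> (1 + 2^(a-1)) a: the first
   pairs a with 2^a - a, the second shows that the number of terms is even,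
   so the sum is a multiple of 2^a.  The moduli 2, 4 and 8 are computed. *)

Lemma totient_leq n : totient n <= n.
Proof.
rewrite totient_count_coprime -[leqRHS]subn0 -[leqRHS]muln1 -sum_nat_const_nat.
by apply: leq_sum => i _; apply: leq_b1.
Qed.

Section LeastPeriod.
Variable P : pred nat.
Hypothesis P_mod : forall o k, 0 < o -> P o -> P k = P (k %% o).

Lemma least_period_dvdn i : 0 < i -> P i -> (forall j, 0 < j < i -> ~~ P j) ->
  forall k, P k = (i %| k).
Proof.
move=> i_gt0 Pi Pmin k; rewrite (P_mod k i_gt0 Pi) /dvdn.
have [->|r_gt0] := posnP (k %% i); first by rewrite -(modnn i) -P_mod.
by rewrite (negbTE (Pmin _ _)) ?r_gt0 ?ltn_pmod // eq_sym gtn_eqF.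
Qed.

Lemma find_iota_dvdn m n : 0 < n <= m -> P n ->
  forall k, P k = ((find (fun k => P k.+1) (iota 0 m)).+1 %| k).
Proof.
move=> /andP[n_gt0 n_le_m] Pn.
have hasP : has (fun k => P k.+1) (iota 0 m).
  by apply/hasP; exists n.-1; rewrite ?mem_iota ?prednK //; lia.
have lt_find : find (fun k => P k.+1) (iota 0 m) < m.
  by rewrite -[m in _ < m](size_iota 0) -has_find.
apply: least_period_dvdn => //.
  by have := nth_find 0 hasP; rewrite nth_iota.
move=> [//|j] /= lt_j; have := before_find 0 lt_j.
by rewrite nth_iota ?add0n // => [->//|]; apply: ltn_trans lt_find.
Qed.

End LeastPeriod.

Lemma expn_modn_period m a o k : a ^ o = 1 %[mod m] -> a ^ k = a ^ (k %% o) %[mod m].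
Proof.
move=> ao; rewrite {1}(divn_eq k o) expnD (mulnC (k %/ o)) expnM -modnMml -modnXm ao.
by rewrite modnXm exp1n modnMml mul1n.
Qed.

Lemma ind_gt0 m a : 0 < ind m a.
Proof. by []. Qed.

Lemma ind_dvdn m a k : 1 < m -> coprime a m -> (a ^ k == 1 %[mod m]) = (ind m a %| k).
Proof.
move=> m_gt1 co_am.
apply: (@find_iota_dvdn (fun k => a ^ k == 1 %[mod m]) _ m (totient m)).
- by move=> o j _ /eqP ao; rewrite (expn_modn_period j ao).
- by rewrite totient_gt0 totient_leq ltnW.
- by rewrite Euler_exp_totient.
Qed.

Lemma carmichael_dvdn_totient m : 1 < m -> carmichael m %| totient m.
Proof.
move=> m_gt1; pose P k := [forall a : 'I_m, coprime a m ==> (a ^ k == 1 %[mod m])].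
have P_mod o k : 0 < o -> P o -> P k = P (k %% o).
  move=> _ /forallP Po; apply: eq_forallb => x.
  by have := Po x; case: (coprime x m) => //= /eqP xo; rewrite (expn_modn_period k xo).
have P_totient : P (totient m).
  by apply/forallP => x; apply/implyP => co_xm; rewrite Euler_exp_totient.
by rewrite /carmichael -(find_iota_dvdn P_mod _ P_totient) // totient_gt0 totient_leq ltnW.
Qed.

(** * Sums over residue sets stable under a unit *)

Lemma sum_predU (I : Type) (r : seq I) (P1 P2 : pred I) (F : I -> nat) :
  (forall i, ~~ (P1 i && P2 i)) ->
  \sum_(i <- r | P1 i || P2 i) F i = \sum_(i <- r | P1 i) F i + \sum_(i <- r | P2 i) F i.
Proof.
move=> disj; rewrite big_mkcond [in RHS]big_mkcond [X in _ = _ + X]big_mkcond -big_split /=.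
by apply: eq_bigr => i _; have := disj i; case: (P1 i); case: (P2 i); rewrite ?addn0.
Qed.

Section InvariantSums.
Variables (m h : nat) (P : pred nat).
Hypotheses (m_gt0 : 0 < m) (co_hm : coprime h m).
Hypothesis P_mulmod : forall a, a < m -> P (h * a %% m) = P a.

Lemma mulmod_inj a b : a < m -> b < m -> h * a = h * b %[mod m] -> a = b.
Proof.
wlog le_ba : a b / b <= a => [sym am bm eq_ab|am bm].
  by case: (leqP b a) => [|/ltnW] le; [apply: sym | apply/esym/sym].
move/eqP; rewrite eqn_mod_dvd ?leq_mul2l ?le_ba ?orbT // -mulnBr.
rewrite Gauss_dvdr ?(coprime_sym m) // => /dvdn_leq; lia.
Qed.

Lemma sum_mulmod : \sum_(a < m | P a) a = \sum_(a < m | P a) (h * a %% m).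
Proof.
pose f (a : 'I_m) : 'I_m := Ordinal (ltn_pmod (h * a) m_gt0).
have f_inj : injective f.
  by move=> a b /(congr1 val) /= eq_ab; apply/val_inj/(mulmod_inj (ltn_ord a) (ltn_ord b)).
by rewrite (reindex_inj f_inj) /=; apply: eq_bigl => a; rewrite P_mulmod.
Qed.

Lemma sum_mulmod_eq : \sum_(a < m | P a) a = h * \sum_(a < m | P a) a %[mod m].
Proof. by rewrite {1}sum_mulmod modn_summ big_distrr. Qed.

Lemma sum_mulmod_eq0 : coprime h.-1 m -> \sum_(a < m | P a) a = 0 %[mod m].
Proof.
move=> co_h1m; have [h0 | h_gt0] := posnP h.
  by move: co_hm; rewrite h0 /coprime gcd0n => /eqP->; rewrite !modn1.
have := sum_mulmod_eq; set S := \sum_(a < m | P a) a.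
rewrite -{1}(prednK h_gt0) mulSn -{1}[S]addn0 => /eqP; rewrite eqn_modDl eq_sym.
by rewrite eqn_mod_dvd // subn0 Gauss_dvdr 1?coprime_sym // mod0n => /eqP.
Qed.

End InvariantSums.

Lemma dvdn_mul_prime_cases o d q : prime q -> 0 < o -> o %| d -> d %| o * q ->
  (o == d) || (o == d %/ q).
Proof.
move=> q_pr o_gt0 /dvdnP[k ->]; rewrite [k * o]mulnC dvdn_pmul2l //.
have [_ q_div] := primeP q_pr.
by case/q_div/orP => /eqP->; rewrite ?muln1 ?mulnK ?prime_gt0 ?eqxx ?orbT.
Qed.

Section PrimeOrderMultiplier.
Variables (m q : nat).
Hypotheses (m_gt1 : 1 < m) (q_pr : prime q).

Lemma coprime_mulmod h a : coprime h m -> coprime a m -> coprime (h * a %% m) m.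
Proof. by move=> co_hm co_am; rewrite coprime_modl coprimeMl co_hm. Qed.

Lemma expn_mulmod_eq1 h a k : h ^ q = 1 %[mod m] -> q %| k ->
  ((h * a %% m) ^ k == 1 %[mod m]) = (a ^ k == 1 %[mod m]).
Proof.
move=> hq /dvdnP[c ->]; rewrite modnXm expnMn -modnMml (mulnC c) expnM.
by rewrite -modnXm hq modnXm exp1n modnMml mul1n.
Qed.

Variable h : nat.
Hypotheses (co_hm : coprime h m) (hq : h ^ q = 1 %[mod m]).

Lemma ind_mulmod_dvdn a k : coprime a m -> q %| k ->
  (ind m (h * a %% m) %| k) = (ind m a %| k).
Proof. by move=> co_am qk; rewrite -!ind_dvdn ?coprime_mulmod ?expn_mulmod_eq1. Qed.

Lemma ind_dvdn_ind_mulmod a : coprime a m -> ind m a %| ind m (h * a %% m) * q.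
Proof.
move=> co_am; rewrite -ind_dvdn // -(expn_mulmod_eq1 _ hq) ?dvdn_mull //.
by rewrite ind_dvdn ?coprime_mulmod ?dvdn_mulr.
Qed.

Lemma ind_mulmod_sq a d : coprime a m -> q * q %| d -> ind m a = d -> ind m (h * a %% m) = d.
Proof.
move=> co_am qqd ad; set o := ind m (h * a %% m).
have qd : q %| d := dvdn_trans (dvdn_mulr q (dvdnn q)) qqd.
have q_dq : q %| d %/ q by rewrite dvdn_divRL.
have o_d : o %| d by rewrite ind_mulmod_dvdn // ad.
have d_oq : d %| o * q by rewrite -ad ind_dvdn_ind_mulmod.
case/orP: (dvdn_mul_prime_cases q_pr (ind_gt0 _ _) o_d d_oq) => /eqP // o_dq.
have d_gt0 : 0 < d by rewrite -ad ind_gt0.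
have dq_gt0 : 0 < d %/ q by rewrite divn_gt0 ?prime_gt0 // dvdn_leq.
have : d %| d %/ q by rewrite -{1}ad -ind_mulmod_dvdn // o_dq.
by move/(dvdn_leq dq_gt0); rewrite leqNgt ltn_Pdiv ?prime_gt1.
Qed.

Lemma ind_mulmod_pair a d : coprime a m -> q %| d -> coprime q (d %/ q) ->
  (ind m a == d) || (ind m a == d %/ q) ->
  (ind m (h * a %% m) == d) || (ind m (h * a %% m) == d %/ q).
Proof.
move=> co_am qd co_q_dq ad; set o := ind m (h * a %% m).
have a_d : ind m a %| d by case/orP: ad => /eqP->; rewrite ?dvdn_div.
have dq_a : d %/ q %| ind m a by case/orP: ad => /eqP->; rewrite ?dvdn_div.
have o_d : o %| d by rewrite ind_mulmod_dvdn.
have dq_o : d %/ q %| o.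
  rewrite -(@Gauss_dvdl _ _ q) 1?coprime_sym //.
  exact: dvdn_trans dq_a (ind_dvdn_ind_mulmod co_am).
have d_oq : d %| o * q by rewrite -(divnK qd) dvdn_mul.
exact: dvdn_mul_prime_cases q_pr (ind_gt0 _ _) o_d d_oq.
Qed.

End PrimeOrderMultiplier.

Section SumsOverOrderClasses.
Variables (m q : nat).
Hypotheses (m_gt1 : 1 < m) (q_pr : prime q).

Lemma ind_pred_mulmod (R : pred nat) h :
  (forall h' a, coprime h' m -> h' ^ q = 1 %[mod m] -> coprime a m ->
     R (ind m a) -> R (ind m (h' * a %% m))) ->
  coprime h m -> h ^ q = 1 %[mod m] -> forall a, a < m ->
  (coprime (h * a %% m) m && R (ind m (h * a %% m))) = (coprime a m && R (ind m a)).
Proof.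
move=> R_mulmod co_hm hq a lt_am.
apply/andP/andP => [[co_ham R_ham] | [co_am Ra]]; last first.
  by split; [apply: coprime_mulmod | apply: R_mulmod].
have co_am : coprime a m by move: co_ham; rewrite coprime_modl coprimeMl => /andP[].
have undo_h : h ^ q.-1 * (h * a %% m) %% m = a.
  rewrite modnMmr mulnA -expnSr prednK ?prime_gt0 //.
  by rewrite -modnMml hq modnMml mul1n modn_small.
split=> //; rewrite -undo_h; apply: R_mulmod => //; first exact: coprimeXl.
by rewrite -expnM mulnC expnM -modnXm hq modnXm exp1n.
Qed.

Lemma ind_eq_mulmod h d : coprime h m -> h ^ q = 1 %[mod m] -> q * q %| d ->
  forall a, a < m ->
  (coprime (h * a %% m) m && (ind m (h * a %% m) == d)) = (coprime a m && (ind m a == d)).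
Proof.
move=> co_hm hq qqd; apply: (ind_pred_mulmod (R := pred1 d)) => // h' a co_h'm h'q co_am /eqP ad.
exact/eqP/(ind_mulmod_sq m_gt1 q_pr).
Qed.

Lemma sum_ind_eq0 h d : coprime h m -> coprime h.-1 m -> h ^ q = 1 %[mod m] -> q * q %| d ->
  sum_ind m d = 0 %[mod m].
Proof.
move=> co_hm co_h1m hq qqd.
apply: (@sum_mulmod_eq0 m h (fun a => coprime a m && (ind m a == d))) => //.
  exact: ltnW.
exact: ind_eq_mulmod.
Qed.

Lemma sum_ind_addn_div_eq0 h d : coprime h m -> coprime h.-1 m -> h ^ q = 1 %[mod m] ->
  q %| d -> coprime q (d %/ q) -> sum_ind m d + sum_ind m (d %/ q) = 0 %[mod m].
Proof.
move=> co_hm co_h1m hq qd co_q_dq.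
have d_gt0 : 0 < d.
  by case: d qd co_q_dq => // _; rewrite div0n prime_coprime ?dvdn0.
rewrite /sum_ind -sum_predU => [|a]; last first.
  apply/negP => /andP[/andP[_ /eqP->] /andP[_ /eqP]].
  by move/eqP; rewrite eqn_leq leqNgt ltn_Pdiv ?prime_gt1 ?andbF.
rewrite (eq_bigl (fun a : 'I_m => coprime a m && ((ind m a == d) || (ind m a == d %/ q)))) => [|a];
  last by rewrite andb_orr.
apply: (@sum_mulmod_eq0 m h
  (fun a => coprime a m && ((ind m a == d) || (ind m a == d %/ q)))) => //.
  exact: ltnW.
apply: (ind_pred_mulmod (R := fun o => (o == d) || (o == d %/ q))) => // h' a co_h'm h'q co_am.
exact: ind_mulmod_pair.
Qed.

End SumsOverOrderClasses.

(** * Moduli 2^n *)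

Lemma predn_sqr_modn m : 0 < m -> m.-1 ^ 2 = 1 %[mod m].
Proof.
case: m => [//|[//|k]] _.
by rewrite (_ : k.+1 ^ 2 = k * k.+2 + 1) ?modnMDl //; nia.
Qed.

Lemma coprime_halfshift t : ~~ odd t -> coprime (1 + t) (2 * t).
Proof.
move=> t_even; rewrite coprimeMr coprimen2 oddD (negbTE t_even) andTb.
by rewrite -coprime_modl addnC modnDl coprime_modl coprime1n.
Qed.

Lemma halfshift_sqr t : ~~ odd t -> (1 + t) ^ 2 = 1 %[mod 2 * t].
Proof.
rewrite -dvdn2 => /dvdnP[k ->].
by rewrite (_ : (1 + k * 2) ^ 2 = (1 + k) * (2 * (k * 2)) + 1) ?modnMDl //; nia.
Qed.

Section EvenModulus.
Variable t : nat.
Hypotheses (t_gt0 : 0 < t) (t_even : ~~ odd t).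
Local Notation m := (2 * t).

Variable P : pred nat.
Hypothesis P_odd : forall a, P a -> odd a.
Hypothesis P_negmod : forall a, a < m -> P (m.-1 * a %% m) = P a.
Hypothesis P_halfshift : forall a, a < m -> P ((1 + t) * a %% m) = P a.

Let S := \sum_(a < m | P a) a.
Let N := \sum_(a < m | P a) 1.

Lemma sum_negmod_pairs : S + S = N * m.
Proof.
have m_gt0 : 0 < m by rewrite muln_gt0.
rewrite {2}/S (sum_mulmod m_gt0 (coprimePn m_gt0) P_negmod) -big_split big_distrl /=.
apply: eq_bigr => a Pa; have a_gt0 : 0 < a by have := P_odd Pa; case: (nat_of_ord a).
have lt_am := ltn_ord a.
have -> : m.-1 * a = a.-1 * m + (m - a).
  have := leq_pmulr m a_gt0; rewrite -!subn1 !mulnBl !mul1n [a * m]mulnC; lia.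
by rewrite modnMDl modn_small ?mul1n ?subnKC ?(ltnW lt_am) // ltn_subrL a_gt0.
Qed.

Lemma sum_halfshift : S = S + N * t %[mod m].
Proof.
have m_gt0 : 0 < m by rewrite muln_gt0.
rewrite {1}/S (sum_mulmod m_gt0 (coprime_halfshift t_even) P_halfshift).
rewrite (eq_bigr (fun a : 'I_m => (a + t) %% m)) => [|a Pa]; last first.
  have := odd_double_half a; rewrite (P_odd Pa) => aE.
  by rewrite -{1}aE (_ : (1 + t) * _ = (a./2 * m) + (a + t)) ?modnMDl //; rewrite -aE /=; nia.
rewrite modn_summ big_split /N big_distrl /=.
by under [in RHS]eq_bigr do rewrite mul1n.
Qed.

Lemma sum_odd_invariant_eq0 : S = 0 %[mod m].
Proof.
have N_even : 2 %| N.
  move: sum_halfshift; rewrite -{1}[S]addn0 => /eqP; rewrite eqn_modDl eq_sym.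
  by rewrite eqn_mod_dvd // subn0 dvdn_pmul2r.
case/dvdnP: N_even sum_negmod_pairs => k -> SE.
have -> : S = k * m by lia.
by rewrite modnMl mod0n.
Qed.

End EvenModulus.

Lemma sum_ind_pow2_eq0 n d : 1 < n -> 4 %| d -> sum_ind (2 ^ n) d = 0 %[mod 2 ^ n].
Proof.
move=> n_gt1 four_d; set t := 2 ^ n.-1.
have t_gt0 : 0 < t by rewrite expn_gt0.
have t_even : ~~ odd t by rewrite oddX orbF; case: (n) n_gt1 => [|[|]].
have m_gt1 : 1 < 2 * t by rewrite (leq_trans _ (leq_pmulr 2 t_gt0)).
have -> : 2 ^ n = 2 * t by rewrite -expnS prednK // ltnW.
apply: (@sum_odd_invariant_eq0 t t_gt0 t_even (fun a => coprime a (2 * t) && (ind (2 * t) a == d))).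
- by move=> a /andP[]; rewrite coprimeMr coprimen2 => /andP[].
- have m_gt0 := ltnW m_gt1.
  exact (ind_eq_mulmod m_gt1 (isT : prime 2) (coprimePn m_gt0) (predn_sqr_modn m_gt0) four_d).
- exact (ind_eq_mulmod m_gt1 (isT : prime 2)
    (coprime_halfshift t_even) (halfshift_sqr t_even) four_d).
Qed.

(** * Units of order dividing p^j modulo an odd prime power *)

Lemma modn_eq1_add1n d x : 1 < d -> x = 1 %[mod d] -> exists2 y, x = 1 + y & d %| y.
Proof.
move=> d_gt1; case: x => [|y]; first by rewrite mod0n modn_small.
by move/eqP; rewrite eqn_mod_dvd // subn1; exists y.
Qed.

Lemma add1n_modn_eq1 d y : d %| y -> 1 + y = 1 %[mod d].
Proof. by case/dvdnP=> k ->; rewrite addnC modnMDl. Qed.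

Lemma modn_dvdn_eq d d' a b : d %| d' -> a = b %[mod d'] -> a = b %[mod d].
Proof. by move=> dd' ab; rewrite -(modn_dvdm a dd') ab modn_dvdm. Qed.

(* The last binomial term y^p is divisible by p y^2 only because p | y and p >= 3. *)
Lemma expn_prime_add1n p y : prime p -> 2 < p -> p %| y ->
  exists2 T, (1 + y) ^ p = 1 + p * y + T & p * y ^ 2 %| T.
Proof.
case: p => [|[|[|k]]] // p_pr _ py.
rewrite expnDn big_ord_recl big_ord_recl big_ord_recr /= !exp1n !mul1n bin1 binn expn1.
exists (\sum_(i < k.+1) 'C(k.+3, i.+2) * y ^ i.+2 + y ^ k.+3).
  rewrite expn0 mul1n /bump /= !add1n !addnA.
  by under eq_bigr do rewrite exp1n mul1n.
apply: dvdn_add.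
  apply: dvdn_sum => i _; apply: dvdn_mul; last exact: dvdn_exp2l.
  by apply: prime_dvd_bin => //; have := ltn_ord i; lia.
have [->|y_gt0] := posnP y; first by rewrite !exp0n.
by rewrite (expnD y 2 k.+1) mulnC dvdn_pmul2l ?expn_gt0 ?y_gt0 ?dvdn_exp.
Qed.

Lemma fermat_little_expXp p j x : prime p -> x ^ (p ^ j) = x %[mod p].
Proof.
move=> p_pr; elim: j => [|j IHj]; first by rewrite expn1.
by rewrite expnSr expnM fermat_little.
Qed.

Lemma sum_modn_eq1 N M : 1 < M ->
  \sum_(0 <= a < N * M | a %% M == 1) a = N + M * 'C(N, 2).
Proof.
move=> M_gt1; elim: N => [|N IHN]; first by rewrite mul0n big_geq // bin_small ?muln0.
rewrite mulSn addnC (@big_cat_nat _ _ _ (N * M)) ?leq_addr //= IHN.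
rewrite -{1}[N * M]add0n big_addn addKn.
rewrite (eq_bigl (fun i => i %% M == 1)) => [|i]; last by rewrite addnC modnMDl.
rewrite big_mkord (big_pred1 (Ordinal M_gt1)) => [|i]; last by rewrite /= modn_small.
by rewrite binS bin1 mulnDr /=; lia.
Qed.

Section OddPrimePower.
Variable p : nat.
Hypotheses (p_pr : prime p) (p_odd : odd p).
Let p_gt2 : 2 < p := odd_prime_gt2 p_odd p_pr.

Lemma pexpn_gt1 i : 0 < i -> 1 < p ^ i.
Proof. by move=> i_gt0; rewrite -(exp1n i) ltn_exp2r // prime_gt1. Qed.

Lemma expp_eq1_modS i x : 0 < i -> x = 1 %[mod p ^ i] -> x ^ p = 1 %[mod p ^ i.+1].
Proof.
move=> i_gt0 /(modn_eq1_add1n (pexpn_gt1 i_gt0)) [y -> piy].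
have py : p %| y by apply: dvdn_trans piy; rewrite dvdn_exp.
have [T -> pyyT] := expn_prime_add1n p_pr p_gt2 py.
rewrite -addnA; apply: add1n_modn_eq1; apply: dvdn_add.
  by rewrite expnS dvdn_pmul2l ?prime_gt0.
apply: dvdn_trans pyyT; rewrite expnS dvdn_pmul2l ?prime_gt0 //.
by apply: dvdn_trans piy _; rewrite expnS dvdn_mull.
Qed.

Lemma expXp_eq1_modD i j x : 0 < i -> x = 1 %[mod p ^ i] ->
  x ^ (p ^ j) = 1 %[mod p ^ (i + j)].
Proof.
move=> i_gt0 x1; elim: j => [|j IHj]; first by rewrite expn1 addn0.
by rewrite expnSr expnM addnS; apply: expp_eq1_modS; rewrite // addn_gt0 i_gt0.
Qed.

Lemma eq1_modS_of_expp i x : 0 < i -> x = 1 %[mod p ^ i] -> x ^ p = 1 %[mod p ^ i.+2] ->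
  x = 1 %[mod p ^ i.+1].
Proof.
move=> i_gt0 /(modn_eq1_add1n (pexpn_gt1 i_gt0)) [y -> piy].
have py : p %| y by apply: dvdn_trans piy; rewrite dvdn_exp.
have [T -> pyyT] := expn_prime_add1n p_pr p_gt2 py.
have pT : p ^ i.+2 %| T.
  apply: dvdn_trans pyyT; rewrite expnS dvdn_pmul2l ?prime_gt0 //.
  by apply: dvdn_trans (dvdn_mul piy piy); rewrite -expnD dvdn_exp2l //; lia.
rewrite -addnA => /eqP; rewrite eqn_mod_dvd ?leq_addr // addKn dvdn_addl //.
by rewrite expnS dvdn_pmul2l ?prime_gt0 // => /add1n_modn_eq1.
Qed.

Lemma eq1_mod_of_expp e x : 0 < e -> x = 1 %[mod p] -> x ^ p = 1 %[mod p ^ e.+1] ->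
  x = 1 %[mod p ^ e].
Proof.
move=> e_gt0 x1 xp.
suff x1_mod i : 0 < i <= e -> x = 1 %[mod p ^ i] by apply: x1_mod; rewrite e_gt0 leqnn.
elim: i => [//|[|i] IHi] /andP[_ le_ie]; first by rewrite expn1.
apply: eq1_modS_of_expp => //; first by apply: IHi; rewrite (ltnW le_ie).
by apply: modn_dvdn_eq xp; rewrite dvdn_exp2l.
Qed.

Lemma eq1_modB_of_expXp j n x : j < n -> x = 1 %[mod p] -> x ^ (p ^ j) = 1 %[mod p ^ n] ->
  x = 1 %[mod p ^ (n - j)].
Proof.
elim: j n x => [|j IHj] n x lt_jn x1; first by rewrite subn0 expn1.
have xp1 : x ^ p = 1 %[mod p] by rewrite -modnXm x1 modnXm exp1n.
rewrite expnS expnM => /(IHj n (x ^ p) (ltnW lt_jn) xp1).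
by rewrite (_ : n - j = (n - j.+1).+1); [apply: eq1_mod_of_expp; rewrite // subn_gt0 | lia].
Qed.

Lemma coprime_expXp_eq1E n j x : j < n ->
  (coprime x (p ^ n) && (x ^ (p ^ j) == 1 %[mod p ^ n])) = (x == 1 %[mod p ^ (n - j)]).
Proof.
move=> lt_jn; have n_gt0 : 0 < n := leq_ltn_trans (leq0n j) lt_jn.
apply/andP/eqP => [[_ /eqP xpj] | x1].
  have x1p : x = 1 %[mod p].
    rewrite -(fermat_little_expXp j x p_pr).
    by apply: modn_dvdn_eq xpj; rewrite dvdn_exp.
  exact: eq1_modB_of_expXp lt_jn x1p xpj.
have x1p : x = 1 %[mod p] by apply: modn_dvdn_eq x1; rewrite dvdn_exp // subn_gt0.
split; first by rewrite coprime_pexpr // -coprime_modl x1p coprime_modl coprime1n.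
by apply/eqP; rewrite -(subnK (ltnW lt_jn)) expXp_eq1_modD // subn_gt0.
Qed.

Lemma sum_ind_dvdn_pfactor n j : j < n ->
  \sum_(a < p ^ n | coprime a (p ^ n) && (ind (p ^ n) a %| p ^ j)) a = p ^ j %[mod p ^ n].
Proof.
move=> lt_jn; have pn_gt1 : 1 < p ^ n by apply: pexpn_gt1; apply: leq_ltn_trans lt_jn.
have pnj_gt1 : 1 < p ^ (n - j) by apply: pexpn_gt1; rewrite subn_gt0.
rewrite (eq_bigl (fun a : 'I_(p ^ n) => a %% p ^ (n - j) == 1)) => [|a]; last first.
  rewrite -[1 in RHS](modn_small pnj_gt1) -coprime_expXp_eq1E //.
  by case: (boolP (coprime a _)) => //= co_a; rewrite ind_dvdn.
rewrite -(big_mkord (fun a => a %% p ^ (n - j) == 1) id).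
rewrite -{1}(subnKC (ltnW lt_jn)) expnD sum_modn_eq1 // bin2odd ?oddX ?p_odd ?orbT //.
by rewrite mulnCA mulnA -expnD subnKC 1?ltnW // addnC mulnC modnMDl.
Qed.

Lemma dvdn_pfactorS k d : (d %| p ^ k.+1) = (d == p ^ k.+1) || (d %| p ^ k).
Proof.
apply/idP/orP => [/(dvdn_pfactor _ _ p_pr)[e le_ek ->] | [/eqP-> // | /dvdn_trans-> //]].
  by rewrite eqn_exp2l ?dvdn_Pexp2l ?prime_gt1 //; lia.
by rewrite dvdn_exp2l.
Qed.

Lemma sum_ind_pfactor n k : k < n -> sum_ind (p ^ n) (p ^ k) = totient (p ^ k) %[mod p ^ n].
Proof.
case: k => [|k] lt_kn.
  rewrite -(sum_ind_dvdn_pfactor lt_kn) /sum_ind.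
  by congr (_ %% _); apply: eq_bigl => a; rewrite dvdn1.
have := sum_ind_dvdn_pfactor lt_kn.
rewrite (eq_bigl (fun a : 'I_(p ^ n) => (coprime a (p ^ n) && (ind (p ^ n) a == p ^ k.+1))
   || (coprime a (p ^ n) && (ind (p ^ n) a %| p ^ k)))) => [|a]; last first.
  by rewrite dvdn_pfactorS andb_orr.
rewrite sum_predU => [|a]; last first.
  apply/negP => /andP[/andP[_ /eqP->] /andP[_]].
  by rewrite dvdn_Pexp2l ?prime_gt1 // ltnn.
rewrite -modnDmr (sum_ind_dvdn_pfactor (ltnW lt_kn)) modnDmr -/(sum_ind _ _) => sumE.
apply/eqP; rewrite -(eqn_modDr (p ^ k)) sumE.
by rewrite totient_pfactor // -mulSnr prednK ?prime_gt0 // -expnS.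
Qed.

End OddPrimePower.

(** * Elements of prime order modulo an odd prime power *)

(* Cauchy's theorem in the unit group of Z/pZ, of order p - 1. *)
Lemma exists_root_of_unity_mod_prime p q : prime p -> prime q -> q %| p.-1 ->
  exists g, [/\ 1 < g, g < p & g ^ q = 1 %[mod p]].
Proof.
move=> p_pr q_pr q_dvd; have p_gt1 := prime_gt1 p_pr.
have : q %| #|units_Zp p| by rewrite card_units_Zp ?prime_gt0 // totient_prime.
case/(Cauchy q_pr) => u _ ord_u.
pose g := nat_of_ord (val u : 'Z_p).
have gE : val u = (g%:R)%R :> 'Z_p by rewrite natr_Zp.
have gq : g ^ q %% p = 1.
  have : ((g ^ q)%:R)%R = 1%R :> 'Z_p by rewrite natrX -gE -val_unitX -ord_u expg_order.
  by move/(congr1 (@nat_of_ord _)); rewrite val_Zp_nat.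
have lt_gp : g < p by rewrite -[p in _ < p](Zp_cast p_gt1) ltn_ord.
exists g; split => //; last by rewrite gq modn_small.
have [g0 | // | g1] := ltngtP g 1.
  by move: gq; rewrite (_ : g = 0) ?exp0n ?prime_gt0 ?mod0n //; lia.
have u1 : u = 1%g by apply/val_inj/val_inj; rewrite /= -/g g1.
by move: q_pr; rewrite -ord_u u1 order1.
Qed.

Lemma exists_root_of_unity_mod_pfactor p n q : prime p -> odd p -> 0 < n ->
  prime q -> q %| p.-1 ->
  exists h, [/\ coprime h (p ^ n), coprime h.-1 (p ^ n) & h ^ q = 1 %[mod p ^ n]].
Proof.
move=> p_pr p_odd n_gt0 q_pr q_dvd.
have [g [g_gt1 lt_gp gq]] := exists_root_of_unity_mod_prime p_pr q_pr q_dvd.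
have g_gt0 : 0 < g := ltnW g_gt1.
pose h := g ^ (p ^ n.-1); have h_gt0 : 0 < h by rewrite expn_gt0 g_gt0.
have hg : h = g %[mod p] := fermat_little_expXp _ _ p_pr.
have h1g1 : h.-1 = g.-1 %[mod p].
  by apply/eqP; rewrite -(eqn_modDl 1) !add1n !prednK //; apply/eqP.
exists h; split.
- rewrite coprime_pexpr // -coprime_modl hg coprime_modl.
  by rewrite coprime_sym prime_coprime // gtnNdvd.
- rewrite coprime_pexpr // -coprime_modl h1g1 coprime_modl.
  rewrite coprime_sym prime_coprime // gtnNdvd ?(leq_ltn_trans (leq_pred g)) //.
  by rewrite -subn1 subn_gt0.
have -> : p ^ n = p ^ (1 + n.-1) by rewrite add1n prednK.
by rewrite /h expnAC; apply: expXp_eq1_modD; rewrite ?expn1.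
Qed.

(** * The Moebius factor *)

Lemma moebius_sq n q : prime q -> q * q %| n -> moebius n = 0%R.
Proof.
move=> q_pr qqn; rewrite /moebius; have [//|n_gt0] := posnP n.
case: allP => // logn1; have qn : q \in primes n.
  by rewrite mem_primes q_pr n_gt0 (dvdn_trans (dvdn_mulr q (dvdnn q)) qqn).
by move: qqn; rewrite -{1}(expn1 q) -expnSr pfactor_dvdn // (eqP (logn1 q qn)).
Qed.

Lemma moebiusM_prime n q : prime q -> 0 < n -> ~~ (q %| n) ->
  moebius (q * n) = (- moebius n)%R.
Proof.
move=> q_pr n_gt0 qn; have q_gt0 := prime_gt0 q_pr.
have qn_gt0 : 0 < q * n by rewrite muln_gt0 q_gt0.
have co_qn : coprime q n by rewrite prime_coprime.
have q_primes : q \notin primes n by rewrite mem_primes (negbTE qn) !andbF.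
have primes_qn : perm_eq (primes (q * n)) (q :: primes n).
  apply: uniq_perm; rewrite ?primes_uniq //= ?q_primes ?primes_uniq // => r.
  by rewrite (primesM _ q_gt0 n_gt0) primes_prime // !inE.
rewrite /moebius !gtn_eqF // (perm_size primes_qn) (perm_all _ primes_qn) /=.
rewrite lognM // logn_prime // eqxx (logn_coprime co_qn) /=.
rewrite (@eq_in_all _ _ (fun r => logn r n == 1)) => [|r r_n]; last first.
  have rq : (r == q) = false by apply: contraNF q_primes => /eqP <-.
  by rewrite lognM // logn_prime // rq.
by case: ifP => _; rewrite ?oppr0 // exprS mulN1r.
Qed.

Lemma gcdn_mul_prime d n q : prime q -> ~~ (q %| d) -> q %| n -> gcdn (q * d) n = q * gcdn d n.
Proof.
move=> q_pr qd /dvdnP[n' ->]; rewrite [n' * q]mulnC -muln_gcdr Gauss_gcdr //.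
by rewrite coprime_sym prime_coprime.
Qed.

Lemma modz_nat_eq a b m : a = b %[mod m] -> (a%:Z = b%:Z %[mod m%:Z])%Z.
Proof. by move=> ab; rewrite !modz_nat ab. Qed.

Lemma modz_opp_of_addn_eq0 a b m (c : int) : a + b = 0 %[mod m] ->
  (b%:Z = c %[mod m%:Z])%Z -> (a%:Z = - c %[mod m%:Z])%Z.
Proof.
move=> /modz_nat_eq abm bc; have -> : (a%:Z = (a + b)%:Z - b%:Z)%R by rewrite PoszD addrK.
by rewrite -modzDml abm modzDml add0r -modzNm bc modzNm.
Qed.

Section OddPrimePowerModulus.
Variables (p n : nat).
Hypotheses (p_pr : prime p) (p_odd : odd p) (n_gt0 : 0 < n).
Let pn_gt1 : 1 < p ^ n := pexpn_gt1 p_pr n_gt0.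

Lemma sum_ind_pfactor_eq0 q d : prime q -> q %| p.-1 -> q * q %| d ->
  sum_ind (p ^ n) d = 0 %[mod p ^ n].
Proof.
move=> q_pr q_dvd qqd.
have [h [co_h co_h1 hq]] := exists_root_of_unity_mod_pfactor p_pr p_odd n_gt0 q_pr q_dvd.
exact (sum_ind_eq0 pn_gt1 q_pr co_h co_h1 hq qqd).
Qed.

Lemma sum_ind_pfactor_addn_div_eq0 q d : prime q -> q %| p.-1 -> q %| d ->
  coprime q (d %/ q) -> sum_ind (p ^ n) d + sum_ind (p ^ n) (d %/ q) = 0 %[mod p ^ n].
Proof.
move=> q_pr q_dvd qd co_q_dq.
have [h [co_h co_h1 hq]] := exists_root_of_unity_mod_pfactor p_pr p_odd n_gt0 q_pr q_dvd.
exact (sum_ind_addn_div_eq0 pn_gt1 q_pr co_h co_h1 hq qd co_q_dq).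
Qed.

Lemma sum_ind_odd_pfactor_coprime d : coprime d p.-1 -> d %| p ^ n.-1 * p.-1 ->
  ((sum_ind (p ^ n) d)%:Z = moebius (gcdn d p.-1) * (totient (p ^ logn p d))%:Z
     %[mod (p ^ n)%:Z])%Z.
Proof.
move=> co_d_pm1; rewrite (eqP co_d_pm1) mul1r Gauss_dvdl //.
case/(dvdn_pfactor _ _ p_pr) => k le_kn ->; rewrite pfactorK //.
by apply/modz_nat_eq/sum_ind_pfactor; rewrite // -(prednK n_gt0).
Qed.

(* For a prime q dividing gcd(d, p - 1): if q^2 | d both sides vanish, otherwise
   the sums for d and d/q are opposite, and so are the Moebius values. *)
Lemma sum_ind_odd_pfactor d : 0 < d -> d %| p ^ n.-1 * p.-1 ->
  ((sum_ind (p ^ n) d)%:Z = moebius (gcdn d p.-1) * (totient (p ^ logn p d))%:Z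
     %[mod (p ^ n)%:Z])%Z.
Proof.
elim/ltn_ind: d => d IHd d_gt0 d_dvd.
have pm1_gt0 : 0 < p.-1 by rewrite -subn1 subn_gt0 prime_gt1.
have [co_d_pm1 | not_co] := boolP (coprime d p.-1).
  exact: sum_ind_odd_pfactor_coprime.
set q := pdiv (gcdn d p.-1).
have q_pr : prime q by apply: pdiv_prime; rewrite ltn_neqAle eq_sym not_co gcdn_gt0 pm1_gt0 orbT.
have q_gcd : q %| gcdn d p.-1 := pdiv_dvd _.
have qd : q %| d := dvdn_trans q_gcd (dvdn_gcdl _ _).
have q_pm1 : q %| p.-1 := dvdn_trans q_gcd (dvdn_gcdr _ _).
have q_neq_p : q != p.
  by apply: contraTneq q_pm1 => ->; rewrite gtnNdvd // prednK ?prime_gt0.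
have co_q_pn : coprime q (p ^ n.-1).
  by apply: coprimeXr; rewrite prime_coprime // dvdn_prime2.
have [q_dq | q_ndq] := boolP (q %| d %/ q).
  have qqd : q * q %| d by rewrite -(divnK qd) mulnC dvdn_pmul2l ?prime_gt0.
  have qq_pm1 : q * q %| p.-1.
    by rewrite -(Gauss_dvdr _ (_ : coprime _ (p ^ n.-1))) ?coprimeMl ?co_q_pn ?(dvdn_trans qqd).
  rewrite (@moebius_sq _ q) ?dvdn_gcd ?qqd // mul0r.
  exact/modz_nat_eq/(sum_ind_pfactor_eq0 q_pr q_pm1).
have co_q_dq : coprime q (d %/ q) by rewrite prime_coprime.
have dE : d = q * (d %/ q) by rewrite mulnC divnK.
have dq_gt0 : 0 < d %/ q by rewrite divn_gt0 ?prime_gt0 // dvdn_leq.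
have q_ngcd : ~~ (q %| gcdn (d %/ q) p.-1).
  by apply: contra q_ndq => /dvdn_trans; apply; apply: dvdn_gcdl.
have gcd_gt0 : 0 < gcdn (d %/ q) p.-1 by rewrite gcdn_gt0 pm1_gt0 orbT.
have IHdq := IHd (d %/ q) (ltn_Pdiv (prime_gt1 q_pr) d_gt0) dq_gt0
  (dvdn_trans (dvdn_div qd) d_dvd).
rewrite dE gcdn_mul_prime // (moebiusM_prime q_pr gcd_gt0 q_ngcd) mulNr.
rewrite (lognM _ (prime_gt0 q_pr) dq_gt0) (logn_prime p q_pr) eq_sym (negbTE q_neq_p) add0n.
apply: modz_opp_of_addn_eq0 IHdq; rewrite -dE.
exact (sum_ind_pfactor_addn_div_eq0 q_pr q_pm1 qd co_q_dq).
Qed.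

End OddPrimePowerModulus.

Lemma sum_indE m d : sum_ind m d = \sum_(0 <= a < m | coprime a m && (ind m a == d)) a.
Proof. by rewrite /sum_ind big_mkord. Qed.

Lemma carmichaelE m : carmichael m =
  (find (fun k => all (fun a => coprime a m ==> (a ^ k.+1 == 1 %[mod m])) (iota 0 m))
        (iota 0 m)).+1.
Proof.
congr _.+1; apply: eq_find => k; apply/forallP/allP => [all_a a | all_a a].
  by rewrite mem_iota => /andP[_ lt_am]; apply: (all_a (Ordinal lt_am)).
by apply: all_a; rewrite mem_iota ltn_ord.
Qed.

Lemma carmichael_2 : carmichael 2 = 1. Proof. by rewrite carmichaelE. Qed.
Lemma carmichael_4 : carmichael 4 = 2. Proof. by rewrite carmichaelE. Qed.
Lemma carmichael_8 : carmichael 8 = 2. Proof. by rewrite carmichaelE. Qed.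

Lemma sum_ind_2_1 : sum_ind 2 1 = 1. Proof. by rewrite sum_indE unlock. Qed.
Lemma sum_ind_4_1 : sum_ind 4 1 = 1. Proof. by rewrite sum_indE unlock. Qed.
Lemma sum_ind_4_2 : sum_ind 4 2 = 3. Proof. by rewrite sum_indE unlock. Qed.
Lemma sum_ind_8_1 : sum_ind 8 1 = 1. Proof. by rewrite sum_indE unlock. Qed.
Lemma sum_ind_8_2 : sum_ind 8 2 = 15. Proof. by rewrite sum_indE unlock. Qed.

Lemma dvdn2_cases d : d %| 2 -> d = 1 \/ d = 2.
Proof. by have [_ two_div] := primeP (isT : prime 2); case/two_div/orP => /eqP; [left | right]. Qed.

Theorem theorem1p8 :
  (forall d : nat, 0 < d -> d %| carmichael 2 -> sum_ind 2 d = 1 %[mod 2])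
  /\ (forall d : nat, 0 < d -> d %| carmichael 4 ->
        ((sum_ind 4 d)%:Z = (-1) ^+ d.+1 %[mod 4])%Z)
  /\ (forall d : nat, 0 < d -> d %| carmichael 8 ->
        ((sum_ind 8 d)%:Z = (-1) ^+ d.+1 %[mod 8])%Z)
  /\ (forall alpha beta : nat, 3 < alpha -> 1 < beta -> beta <= alpha - 2 ->
        sum_ind (2 ^ alpha) (2 ^ beta) = 0 %[mod 2 ^ alpha])
  /\ (forall p alpha d : nat, prime p -> odd p -> 0 < alpha ->
        0 < d -> d %| carmichael (p ^ alpha) ->
        ((sum_ind (p ^ alpha) d)%:Z
           = moebius (gcdn d p.-1) * (totient (p ^ logn p d))%:Z
           %[mod (p ^ alpha)%:Z])%Z).
Proof.
split; [|split; [|split; [|split]]].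
- by move=> d _; rewrite carmichael_2 dvdn1 => /eqP->; rewrite sum_ind_2_1.
- by move=> d _; rewrite carmichael_4 => /dvdn2_cases[]->; rewrite ?sum_ind_4_1 ?sum_ind_4_2.
- by move=> d _; rewrite carmichael_8 => /dvdn2_cases[]->; rewrite ?sum_ind_8_1 ?sum_ind_8_2.
-
  move=> alpha beta alpha_gt3 beta_gt1 _.
  apply: sum_ind_pow2_eq0; first exact: leq_trans _ alpha_gt3.
  by rewrite (_ : 4 = 2 ^ 2) // dvdn_exp2l.
- move=> p alpha d p_pr p_odd alpha_gt0 d_gt0 d_dvd; apply: sum_ind_odd_pfactor => //.
  rewrite mulnC -totient_pfactor //; apply: dvdn_trans d_dvd _.
  exact/carmichael_dvdn_totient/pexpn_gt1.
Qed.
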